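(* Let $\Lambda=\mathsf{iA}\oplus\Gamma$ be an iA-logic. Then for every S4K-logic $\Theta$ with $(\mathsf{S4}\otimes\mathsf K)\oplus t(\Gamma)\subseteq\Theta\subseteq(\mathsf{S4}\otimes\mathsf K)\oplus\mathsf{Grz_i}\oplus t(\Gamma)\oplus\mathsf{BHL}$, $\Lambda$ is embedded in $\Theta$ by $t$: for all $\varphi\in\mathcal L_{\multimap}$, $\varphi\in\Lambda$ iff $t(\varphi)\in\Theta$.
   Context: $\mathcal L_{\multimap}$: atoms, $\top,\bot,\wedge,\vee,\to$ and binary $\multimap$. $\mathsf{iA}$: least set containing substitution instances of intuitionistic tautologies and instances of $((\varphi\multimap\psi)\wedge(\varphi\multimap\chi))\to(\varphi\multimap(\psi\wedge\chi))$, $((\varphi\multimap\chi)\wedge(\psi\multimap\chi))\to((\varphi\vee\psi)\multimap\chi)$, $((\varphi\multimap\psi)\wedge(\psi\multimap\chi))\to(\varphi\multimap\chi)$, closed under modus ponens and the rule from $\varphi\to\psi$ infer $\varphi\multimap\psi$; $\mathsf{iA}\oplus\Gamma$ is the least extension containing $\Gamma$ closed under those rules and uniform substitution. S4K-logic: set of formulae of the classical bimodal language $\mathcal L_{i,m}$ ($\Box_i,\Box_m$) containing classical tautologies, $\mathsf K$ for both boxes, $\Box_ip\to p$, $\Box_ip\to\Box_i\Box_ip$, closed under modus ponens, necessitation for both boxes and substitution; $\mathsf{S4}\otimes\mathsf K$ is the least one and $\oplus$ adds axioms. $\mathsf{Grz_i}$: $\Box_i(\Box_i(p\to\Box_ip)\to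 p)\to p$. $\mathsf{BHL}$: $\Box_mp\to\Box_i\Box_mp$. Translation $t$: $t(p)=\Box_ip$, $t(\top)=\top$, $t(\bot)=\bot$, $t(\varphi\star\psi)=\Box_i(t\varphi\star t\psi)$ for $\star\in\{\wedge,\vee,\to\}$, $t(\varphi\multimap\psi)=\Box_i\Box_m(t\varphi\to t\psi)$. *)

From Stdlib Require Import Bool.

Inductive form : Type :=
| Var : nat -> form
| Top : form
| Bot : form
| And : form -> form -> form
| Or  : form -> form -> form
| Imp : form -> form -> form
| Str : form -> form -> form.   (* strict implication  φ ⊸ ψ *)

Fixpoint subst (s : nat -> form) (f : form) : form :=
  match f with
  | Var n => s n
  | Top => Top
  | Bot => Bot
  | And a b => And (subst s a) (subst s b)
  | Or a b => Or (subst s a) (subst s b)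
  | Imp a b => Imp (subst s a) (subst s b)
  | Str a b => Str (subst s a) (subst s b)
  end.

Fixpoint str_free (f : form) : Prop :=
  match f with
  | Var _ | Top | Bot => True
  | And a b | Or a b | Imp a b => str_free a /\ str_free b
  | Str _ _ => False
  end.

Inductive ipc : form -> Prop :=
| ipc_K : forall a b, str_free a -> str_free b -> ipc (Imp a (Imp b a))
| ipc_S : forall a b c, str_free a -> str_free b -> str_free c ->
    ipc (Imp (Imp a (Imp b c)) (Imp (Imp a b) (Imp a c)))
| ipc_and1 : forall a b, str_free a -> str_free b -> ipc (Imp (And a b) a)
| ipc_and2 : forall a b, str_free a -> str_free b -> ipc (Imp (And a b) b)
| ipc_and3 : forall a b, str_free a -> str_free b -> ipc (Imp a (Imp b (And a b)))
| ipc_or1 : forall a b, str_free a -> str_free b -> ipc (Imp a (Or a b))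
| ipc_or2 : forall a b, str_free a -> str_free b -> ipc (Imp b (Or a b))
| ipc_or3 : forall a b c, str_free a -> str_free b -> str_free c ->
    ipc (Imp (Imp a c) (Imp (Imp b c) (Imp (Or a b) c)))
| ipc_bot : forall a, str_free a -> ipc (Imp Bot a)
| ipc_top : ipc Top
| ipc_mp : forall a b, ipc a -> ipc (Imp a b) -> ipc b.

Inductive iA_ext (G : form -> Prop) : form -> Prop :=
| iA_ipc : forall s f, ipc f -> iA_ext G (subst s f)
| iA_ax1 : forall a b c,
    iA_ext G (Imp (And (Str a b) (Str a c)) (Str a (And b c)))
| iA_ax2 : forall a b c,
    iA_ext G (Imp (And (Str a c) (Str b c)) (Str (Or a b) c))
| iA_ax3 : forall a b c,
    iA_ext G (Imp (And (Str a b) (Str b c)) (Str a c))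
| iA_hyp : forall f, G f -> iA_ext G f
| iA_mp : forall a b, iA_ext G a -> iA_ext G (Imp a b) -> iA_ext G b
| iA_str : forall a b, iA_ext G (Imp a b) -> iA_ext G (Str a b)
| iA_subst : forall s f, iA_ext G f -> iA_ext G (subst s f).

Inductive mform : Type :=
| MVar : nat -> mform
| MTop : mform
| MBot : mform
| MAnd : mform -> mform -> mform
| MOr  : mform -> mform -> mform
| MImp : mform -> mform -> mform
| BoxI : mform -> mform
| BoxM : mform -> mform.

Fixpoint msubst (s : nat -> mform) (f : mform) : mform :=
  match f with
  | MVar n => s n
  | MTop => MTop
  | MBot => MBot
  | MAnd a b => MAnd (msubst s a) (msubst s b)
  | MOr a b => MOr (msubst s a) (msubst s b)
  | MImp a b => MImp (msubst s a) (msubst s b)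
  | BoxI a => BoxI (msubst s a)
  | BoxM a => BoxM (msubst s a)
  end.

Fixpoint box_free (f : mform) : Prop :=
  match f with
  | MVar _ | MTop | MBot => True
  | MAnd a b | MOr a b | MImp a b => box_free a /\ box_free b
  | BoxI _ | BoxM _ => False
  end.

Fixpoint beval (v : nat -> bool) (f : mform) : bool :=
  match f with
  | MVar n => v n
  | MTop => true
  | MBot => false
  | MAnd a b => beval v a && beval v b
  | MOr a b => beval v a || beval v b
  | MImp a b => implb (beval v a) (beval v b)
  | BoxI _ | BoxM _ => false
  end.

Definition ctaut (f : mform) : Prop := box_free f /\ forall v, beval v f = true.

Definition p0 : mform := MVar 0.
Definition p1 : mform := MVar 1.

Definition K_i : mform := MImp (BoxI (MImp p0 p1)) (MImp (BoxI p0) (BoxI p1)).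
Definition K_m : mform := MImp (BoxM (MImp p0 p1)) (MImp (BoxM p0) (BoxM p1)).
Definition T_i : mform := MImp (BoxI p0) p0.
Definition Four_i : mform := MImp (BoxI p0) (BoxI (BoxI p0)).

Definition Grz_i : mform :=
  MImp (BoxI (MImp (BoxI (MImp p0 (BoxI p0))) p0)) p0.
Definition BHL : mform := MImp (BoxM p0) (BoxI (BoxM p0)).

Definition is_S4K_logic (L : mform -> Prop) : Prop :=
  (forall s f, ctaut f -> L (msubst s f)) /\
  L K_i /\ L K_m /\ L T_i /\ L Four_i /\
  (forall a b, L a -> L (MImp a b) -> L b) /\
  (forall a, L a -> L (BoxI a)) /\
  (forall a, L a -> L (BoxM a)) /\
  (forall s f, L f -> L (msubst s f)).

Inductive S4K_ext (D : mform -> Prop) : mform -> Prop :=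
| S_taut : forall s f, ctaut f -> S4K_ext D (msubst s f)
| S_Ki : S4K_ext D K_i
| S_Km : S4K_ext D K_m
| S_Ti : S4K_ext D T_i
| S_4i : S4K_ext D Four_i
| S_hyp : forall f, D f -> S4K_ext D f
| S_mp : forall a b, S4K_ext D a -> S4K_ext D (MImp a b) -> S4K_ext D b
| S_neci : forall a, S4K_ext D a -> S4K_ext D (BoxI a)
| S_necm : forall a, S4K_ext D a -> S4K_ext D (BoxM a)
| S_subst : forall s f, S4K_ext D f -> S4K_ext D (msubst s f).

Fixpoint t (f : form) : mform :=
  match f with
  | Var n => BoxI (MVar n)
  | Top => MTop
  | Bot => MBot
  | And a b => BoxI (MAnd (t a) (t b))
  | Or a b => BoxI (MOr (t a) (t b))
  | Imp a b => BoxI (MImp (t a) (t b))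
  | Str a b => BoxI (BoxM (MImp (t a) (t b)))
  end.

Definition t_img (G : form -> Prop) : mform -> Prop :=
  fun g => exists f, G f /\ g = t f.

Definition upper_axioms (G : form -> Prop) : mform -> Prop :=
  fun g => g = Grz_i \/ t_img G g \/ g = BHL.

From Stdlib Require Import Classical ClassicalEpsilon List Lia Cantor Wf_nat.
Import ListNotations.

(* Soundness (φ ∈ Λ ⇒ t(φ) ∈ Θ) is a syntactic induction on derivations in Λ:
   inside any S4K-logic the t-images are □i-stable, which is exactly what is
   needed to derive the t-images of the IPC axioms, of the iA axioms and of
   the ⊸-rule, and t commutes with substitution up to provable equivalence.

   Faithfulness (t(φ) ∈ Θ ⇒ φ ∈ Λ) is semantic. The points of the canonical
   model are the prime theories of Λ, found by a Lindenbaum construction.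
   □i is interpreted as the interior operator of the topology whose basic
   opens are the sets [a] of prime theories containing a, and □m as the
   "strict" modality: F ∈ □m S iff F contains strict implications
   c1 ⊸ d1, …, cn ⊸ dn such that every prime theory respecting all ci → di
   lies in S.  Valuations range over definable sets (those determined by
   finitely many formulas); definable sets are clause-definable (a CNF
   lemma), which makes □i and □m of a definable set basic-open and validates
   Grz_i. All axioms of the upper logic are then valid, and a truth lemma
   says that t(φ) holds exactly at the prime theories containing φ. *)

Section IADerivations.
Variable G : form -> Prop.

Definition le (a b : form) : Prop := iA_ext G (Imp a b).

Definition sub3 (a b c : form) (n : nat) : form :=
  match n with 0 => a | 1 => b | _ => c end.

Lemma ax_K a b : iA_ext G (Imp a (Imp b a)).
Proof. exact (iA_ipc G (sub3 a b a) _ (ipc_K (Var 0) (Var 1) I I)). Qed.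
Lemma ax_S a b c : iA_ext G (Imp (Imp a (Imp b c)) (Imp (Imp a b) (Imp a c))).
Proof. exact (iA_ipc G (sub3 a b c) _ (ipc_S (Var 0) (Var 1) (Var 2) I I I)). Qed.
Lemma ax_and1 a b : le (And a b) a.
Proof. exact (iA_ipc G (sub3 a b a) _ (ipc_and1 (Var 0) (Var 1) I I)). Qed.
Lemma ax_and2 a b : le (And a b) b.
Proof. exact (iA_ipc G (sub3 a b a) _ (ipc_and2 (Var 0) (Var 1) I I)). Qed.
Lemma ax_and3 a b : le a (Imp b (And a b)).
Proof. exact (iA_ipc G (sub3 a b a) _ (ipc_and3 (Var 0) (Var 1) I I)). Qed.
Lemma ax_or1 a b : le a (Or a b).
Proof. exact (iA_ipc G (sub3 a b a) _ (ipc_or1 (Var 0) (Var 1) I I)). Qed.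
Lemma ax_or2 a b : le b (Or a b).
Proof. exact (iA_ipc G (sub3 a b a) _ (ipc_or2 (Var 0) (Var 1) I I)). Qed.
Lemma ax_or3 a b c : iA_ext G (Imp (Imp a c) (Imp (Imp b c) (Imp (Or a b) c))).
Proof. exact (iA_ipc G (sub3 a b c) _ (ipc_or3 (Var 0) (Var 1) (Var 2) I I I)). Qed.
Lemma ax_bot a : le Bot a.
Proof. exact (iA_ipc G (sub3 a a a) _ (ipc_bot (Var 0) I)). Qed.
Lemma ax_top : iA_ext G Top.
Proof. exact (iA_ipc G (sub3 Top Top Top) _ ipc_top). Qed.

Lemma thm_le a b : iA_ext G b -> le a b.
Proof. intros Hb. exact (iA_mp G _ _ Hb (ax_K b a)). Qed.

Lemma le_mp x y z : le x (Imp y z) -> le x y -> le x z.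
Proof. intros H1 H2. exact (iA_mp G _ _ H2 (iA_mp G _ _ H1 (ax_S x y z))). Qed.

Lemma le_refl a : le a a.
Proof. exact (le_mp a (Imp a a) a (ax_K a (Imp a a)) (ax_K a a)). Qed.

Lemma le_trans a b c : le a b -> le b c -> le a c.
Proof. intros H1 H2. exact (le_mp _ _ _ (thm_le a _ H2) H1). Qed.

Lemma top_le b : le Top b -> iA_ext G b.
Proof. intros H. exact (iA_mp G _ _ ax_top H). Qed.

Lemma and_intro c a b : le c a -> le c b -> le c (And a b).
Proof. intros H1 H2. exact (le_mp _ _ _ (le_trans _ _ _ H1 (ax_and3 a b)) H2). Qed.

Lemma or_elim a b c : le a c -> le b c -> le (Or a b) c.
Proof. intros H1 H2. exact (iA_mp G _ _ H2 (iA_mp G _ _ H1 (ax_or3 a b c))). Qed.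

Lemma curry a b c : le (And a b) c -> le a (Imp b c).
Proof.
  intros H. apply (le_trans _ _ _ (ax_and3 a b)).
  exact (iA_mp G _ _ (iA_mp G _ _ H (ax_K _ b)) (ax_S b (And a b) c)).
Qed.

Lemma uncurry a b c : le a (Imp b c) -> le (And a b) c.
Proof. intros H. exact (le_mp _ _ _ (le_trans _ _ _ (ax_and1 a b) H) (ax_and2 a b)). Qed.

Lemma and_mono a b a' b' : le a a' -> le b b' -> le (And a b) (And a' b').
Proof.
  intros H1 H2. apply and_intro;
    [exact (le_trans _ _ _ (ax_and1 a b) H1) | exact (le_trans _ _ _ (ax_and2 a b) H2)].
Qed.

Lemma distr a b c : le (And a (Or b c)) (Or (And a b) (And a c)).
Proof.
  apply uncurry, curry.
  apply (le_trans _ (And (Or b c) a)); [apply and_intro; [apply ax_and2 | apply ax_and1] |].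
  apply uncurry, or_elim; apply curry; eapply le_trans;
    try (apply and_intro; [apply ax_and2 | apply ax_and1]); [apply ax_or1 | apply ax_or2].
Qed.

Lemma str_of_le X a b : le a b -> le X (Str a b).
Proof. intros H. apply thm_le, iA_str, H. Qed.

Lemma str_trans X a b c : le X (Str a b) -> le X (Str b c) -> le X (Str a c).
Proof. intros H1 H2. exact (le_trans _ _ _ (and_intro _ _ _ H1 H2) (iA_ax3 G a b c)). Qed.

Lemma str_conj X a b c : le X (Str a b) -> le X (Str a c) -> le X (Str a (And b c)).
Proof. intros H1 H2. exact (le_trans _ _ _ (and_intro _ _ _ H1 H2) (iA_ax1 G a b c)). Qed.

Lemma str_disj X a b c : le X (Str a c) -> le X (Str b c) -> le X (Str (Or a b) c).
Proof. intros H1 H2. exact (le_trans _ _ _ (and_intro _ _ _ H1 H2) (iA_ax2 G a b c)). Qed.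

End IADerivations.

(* An enumeration en : nat -> form of all formulas, needed for the
   Lindenbaum construction: formulas are coded by Cantor pairing, and a
   code is decoded with a depth bound supplied alongside it. *)
Fixpoint enc (f : form) : nat :=
  match f with
  | Var n => to_nat (0, n)
  | Top => to_nat (1, 0)
  | Bot => to_nat (2, 0)
  | And a b => to_nat (3, to_nat (enc a, enc b))
  | Or a b => to_nat (4, to_nat (enc a, enc b))
  | Imp a b => to_nat (5, to_nat (enc a, enc b))
  | Str a b => to_nat (6, to_nat (enc a, enc b))
  end.

Fixpoint dec (k n : nat) : form :=
  match k with
  | 0 => Top
  | S k =>
    let (tag, r) := of_nat n in
    let i := fst (of_nat r) in
    let j := snd (of_nat r) in
    match tag with
    | 0 => Var r
    | 1 => Top
    | 2 => Bot
    | 3 => And (dec k i) (dec k j)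
    | 4 => Or (dec k i) (dec k j)
    | 5 => Imp (dec k i) (dec k j)
    | _ => Str (dec k i) (dec k j)
    end
  end.

Fixpoint depth (f : form) : nat :=
  match f with
  | Var _ | Top | Bot => 1
  | And a b | Or a b | Imp a b | Str a b => S (Nat.max (depth a) (depth b))
  end.

Lemma dec_enc f k : depth f <= k -> dec k (enc f) = f.
Proof.
  revert k; induction f; intros k Hk; destruct k as [|k]; cbn -[to_nat of_nat] in *;
    try lia; rewrite ?cancel_of_to; cbn -[to_nat of_nat]; try reflexivity;
    rewrite ?cancel_of_to, IHf1, IHf2 by lia; reflexivity.
Qed.

Definition en (n : nat) : form := let (k, c) := of_nat n in dec k c.

Lemma en_surj f : exists n, en n = f.
Proof.
  exists (to_nat (depth f, enc f)). unfold en. rewrite cancel_of_to.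
  apply dec_enc. lia.
Qed.

Section CanonicalModel.
Variable G : form -> Prop.
Local Notation le := (le G).

Record prime (F : form -> Prop) : Prop := {
  prime_up : forall x y, F x -> le x y -> F y;
  prime_and_intro : forall x y, F x -> F y -> F (And x y);
  prime_or_elim : forall x y, F (Or x y) -> F x \/ F y;
  prime_bot : ~ F Bot;
  prime_top : F Top }.

Lemma pr_and F x y : prime F -> (F (And x y) <-> F x /\ F y).
Proof.
  intros HP. split.
  - intros H. split; eapply prime_up; eauto; [apply ax_and1 | apply ax_and2].
  - intros [H1 H2]. apply prime_and_intro; auto.
Qed.

Lemma pr_or F x y : prime F -> (F (Or x y) <-> F x \/ F y).
Proof.
  intros HP. split.
  - apply prime_or_elim; auto.
  - intros [H|H]; eapply prime_up; eauto; [apply ax_or1 | apply ax_or2].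
Qed.

Lemma pr_thm F x : prime F -> iA_ext G x -> F x.
Proof. intros HP H. exact (prime_up F HP Top x (prime_top F HP) (thm_le G Top x H)). Qed.

Lemma pr_imp F x y : prime F -> F (Imp x y) -> F x -> F y.
Proof.
  intros HP H1 H2. apply (prime_up F HP (And (Imp x y) x)).
  - apply pr_and; auto.
  - apply uncurry, le_refl.
Qed.

(* Walk through the enumeration, adding en n to the current
   finite conjunction whenever this does not make it entail b. *)
Section Lindenbaum.
Variables a b : form.
Hypothesis a_nle_b : ~ le a b.

Fixpoint chain (n : nat) : form :=
  match n with
  | 0 => a
  | S n => if excluded_middle_informative (le (And (chain n) (en n)) b)
           then chain n else And (chain n) (en n)
  end.

Lemma chain_nle n : ~ le (chain n) b.
Proof.
  induction n; simpl; auto.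
  destruct (excluded_middle_informative _); auto.
Qed.

Lemma chain_mono n m : n <= m -> le (chain m) (chain n).
Proof.
  induction 1 as [|m _ IH]; [apply le_refl |].
  eapply le_trans; [| exact IH]. simpl.
  destruct (excluded_middle_informative _); [apply le_refl | apply ax_and1].
Qed.

Lemma chain_decides n : le (chain (S n)) (en n) \/ le (And (chain n) (en n)) b.
Proof.
  simpl. destruct (excluded_middle_informative _); [right | left]; auto. apply ax_and2.
Qed.

Definition chain_theory (x : form) : Prop := exists n, le (chain n) x.

Lemma chain_theory_excluded x : ~ chain_theory x -> exists i, le (And (chain i) x) b.
Proof.
  intros Hx. destruct (en_surj x) as [i <-]. exists i.
  destruct (chain_decides i) as [H|H]; [exfalso; apply Hx; exists (S i) |]; auto.
Qed.

Lemma chain_theory_prime : prime chain_theory.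
Proof.
  split.
  - intros x y [n Hn] H. exists n. eapply le_trans; eauto.
  - intros x y [n Hn] [m Hm]. exists (Nat.max n m). apply and_intro;
      (eapply le_trans; [apply chain_mono | eassumption]); lia.
  - intros x y [n Hn]. apply NNPP. intros Hxy. apply not_or_and in Hxy as [Hx Hy].
    destruct (chain_theory_excluded x Hx) as [i Hi].
    destruct (chain_theory_excluded y Hy) as [j Hj].
    set (k := Nat.max n (Nat.max i j)).
    apply (chain_nle k).
    assert (Hk : le (chain k) (Or (And (chain k) x) (And (chain k) y))).
    { eapply le_trans; [| apply distr]. apply and_intro; [apply le_refl |].
      eapply le_trans; [apply chain_mono | exact Hn]. lia. }
    eapply le_trans; [exact Hk |]. apply or_elim.
    + eapply le_trans; [| exact Hi]. apply and_mono; [apply chain_mono; lia | apply le_refl].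
    + eapply le_trans; [| exact Hj]. apply and_mono; [apply chain_mono; lia | apply le_refl].
  - intros [n Hn]. apply (chain_nle n). eapply le_trans; [exact Hn | apply ax_bot].
  - exists 0. apply thm_le, ax_top.
Qed.

Lemma separation : exists F, prime F /\ F a /\ ~ F b.
Proof.
  exists chain_theory. split; [apply chain_theory_prime | split].
  - exists 0. apply le_refl.
  - intros [n Hn]. exact (chain_nle n Hn).
Qed.

End Lindenbaum.

Lemma sep a b : (forall F, prime F -> F a -> F b) -> le a b.
Proof.
  intros H. apply NNPP. intros Hn.
  destruct (separation a b Hn) as [F [HP [Ha Hb]]]. exact (Hb (H F HP Ha)).
Qed.

Definition conj (l : list form) : form := fold_right And Top l.

Lemma pr_conj F l : prime F -> (F (conj l) <-> forall x, In x l -> F x).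
Proof.
  intros HP; induction l as [|y l IH]; simpl.
  - split; [tauto | intros; apply prime_top; auto].
  - rewrite pr_and, IH by auto. split.
    + intros [H1 H2] x [<-|Hx]; auto.
    + intros H; split; auto.
Qed.

Definition clauses (L : list (form * form)) (F : form -> Prop) : Prop :=
  forall p, In p L -> ~ F (fst p) \/ F (snd p).

Definition conjstr (L : list (form * form)) : form :=
  conj (map (fun p => Str (fst p) (snd p)) L).
Definition conjimp (L : list (form * form)) : form :=
  conj (map (fun p => Imp (fst p) (snd p)) L).

Lemma pr_conj_map F (h : form * form -> form) L : prime F ->
  (F (conj (map h L)) <-> forall p, In p L -> F (h p)).
Proof.
  intros HP. rewrite pr_conj by auto. split.
  - intros H p Hp. apply H, in_map, Hp.
  - intros H x Hx. apply in_map_iff in Hx as [p [<- Hp]]. auto.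
Qed.

Lemma clauses_app L1 L2 F : clauses (L1 ++ L2) F <-> clauses L1 F /\ clauses L2 F.
Proof.
  unfold clauses. split.
  - intros H; split; intros p Hp; apply H, in_or_app; auto.
  - intros [H1 H2] p Hp. apply in_app_or in Hp as [Hp|Hp]; auto.
Qed.

Lemma clause_single a c F : prime F -> ((F a -> F c) <-> clauses [(a, c)] F).
Proof.
  intros HP. unfold clauses. split.
  - intros Hi p [<-|[]]. simpl. destruct (classic (F a)); auto.
  - intros Hc Ha. destruct (Hc (a, c) (or_introl eq_refl)); simpl in *; tauto.
Qed.

(* By induction on the clauses, using
   ax1–ax3 to move the case split on c ∈ H under ⊸. *)
Lemma str_complete L : forall a b,
  (forall H, prime H -> H a -> clauses L H -> H b) -> le (conjstr L) (Str a b).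
Proof.
  induction L as [|[c d] L IH]; intros a b Hyp.
  - apply str_of_le, sep. intros H HP Ha. apply Hyp; auto. intros p [].
  - set (X := conjstr ((c, d) :: L)).
    assert (HX : le X (conjstr L)) by apply ax_and2.
    assert (Hcd : le X (Str c d)) by apply ax_and1.
    (* with d assumed, a yields b *)
    assert (Had : le X (Str (And a d) b)).
    { eapply le_trans; [exact HX |]. apply IH. intros H HP Had HL.
      apply pr_and in Had as [Ha Hd]; auto.
      apply Hyp; auto. intros p [<-|Hp]; simpl; auto. }
    (* otherwise c must fail, so a yields b or c *)
    assert (Hbc : le X (Str a (Or b c))).
    { eapply le_trans; [exact HX |]. apply IH. intros H HP Ha HL.
      apply pr_or; auto. destruct (classic (H c)) as [Hc|Hc]; auto.
      left. apply Hyp; auto. intros p [<-|Hp]; simpl; auto. }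
    assert (Hbac : le X (Str a (Or b (And a c)))).
    { eapply str_trans.
      - apply str_conj; [apply str_of_le, le_refl | exact Hbc].
      - apply str_of_le. eapply le_trans; [apply distr |]. apply or_elim.
        + eapply le_trans; [apply ax_and2 | apply ax_or1].
        + apply ax_or2. }
    assert (Hacb : le X (Str (And a c) b)).
    { eapply str_trans; [| exact Had]. apply str_conj; [apply str_of_le, ax_and1 |].
      eapply str_trans; [apply str_of_le, ax_and2 | exact Hcd]. }
    eapply str_trans; [exact Hbac |].
    apply str_disj; [apply str_of_le, le_refl | exact Hacb].
Qed.

Definition pset := (form -> Prop) -> Prop.

(* □i: interior in the topology with basic opens [a] = {H | a ∈ H}. *)
Definition IB (S : pset) : pset :=
  fun F => exists a, F a /\ forall H, prime H -> H a -> S H.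

Definition MB (S : pset) : pset :=
  fun F => exists L, (forall p, In p L -> F (Str (fst p) (snd p))) /\
                     forall H, prime H -> clauses L H -> S H.

Lemma IB_ext S T : (forall H, prime H -> (S H <-> T H)) -> forall F, IB S F <-> IB T F.
Proof.
  intros E F. split; intros [a [Ha Hs]]; exists a; split; auto;
    intros H HP Ha'; apply E; auto.
Qed.

Lemma MB_ext S T : (forall H, prime H -> (S H <-> T H)) -> forall F, MB S F <-> MB T F.
Proof.
  intros E F. split; intros [L [Ha Hs]]; exists L; split; auto;
    intros H HP Ha'; apply E; auto.
Qed.

Lemma IB_basic a F : prime F -> (IB (fun H => H a) F <-> F a).
Proof.
  intros HP. split.
  - intros [c [Hc Hs]]. eapply prime_up; eauto. apply sep. auto.
  - intros Ha. exists a. auto.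
Qed.

Lemma IB_clauses L F : prime F -> (IB (clauses L) F <-> F (conjimp L)).
Proof.
  intros HP. unfold conjimp. rewrite pr_conj_map by auto. split.
  - intros [e [He Hs]] p Hp. eapply prime_up; [auto | exact He |].
    apply curry, sep. intros H HH Hea.
    apply pr_and in Hea as [H1 H2]; auto.
    destruct (Hs H HH H1 p Hp); tauto.
  - intros Hc. exists (conjimp L). split; [unfold conjimp; apply pr_conj_map; auto |].
    intros H HH Hci p Hp. unfold conjimp in Hci. rewrite pr_conj_map in Hci by auto.
    destruct (classic (H (fst p))) as [Ha|Ha]; auto.
    right. eapply pr_imp; eauto.
Qed.

Lemma MB_clauses L F : prime F -> (MB (clauses L) F <-> F (conjstr L)).
Proof.
  intros HP. unfold conjstr. rewrite pr_conj_map by auto. split.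
  - intros [L' [HL' Hs]] p Hp. apply (prime_up F HP (conjstr L')).
    + unfold conjstr. apply pr_conj_map; auto.
    + apply str_complete. intros H HH Ha Hc. destruct (Hs H HH Hc p Hp); tauto.
  - intros Hc. exists L. auto.
Qed.

Definition agree (O : list form) (F H : form -> Prop) : Prop :=
  forall o, In o O -> (F o <-> H o).

Definition determined (O : list form) (S : pset) : Prop :=
  forall F H, prime F -> prime H -> agree O F H -> S F -> S H.

Definition definable (S : pset) : Prop := exists O, determined O S.

Lemma agree_sym O F H : agree O F H -> agree O H F.
Proof. intros E o Ho. symmetry. auto. Qed.

Lemma determined_iff O S F H : determined O S -> prime F -> prime H ->
  agree O F H -> (S F <-> S H).
Proof. intros D HF HH E. split; apply D; auto using agree_sym. Qed.

Lemma clauses_guard_in o L F : prime F ->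
  (clauses (map (fun p => (And o (fst p), snd p)) L) F <-> (F o -> clauses L F)).
Proof.
  intros HP. unfold clauses. split.
  - intros Hc Fo p Hp. destruct (Hc _ (in_map _ _ _ Hp)) as [H|H]; simpl in H; auto.
    left. intros Hp1. apply H, pr_and; auto.
  - intros Hc q Hq. apply in_map_iff in Hq as [p [<- Hp]]. simpl. rewrite pr_and by auto.
    destruct (classic (F o)) as [Fo|Fo]; [destruct (Hc Fo p Hp) |]; tauto.
Qed.

Lemma clauses_guard_out o L F : prime F ->
  (clauses (map (fun p => (fst p, Or o (snd p))) L) F <-> (~ F o -> clauses L F)).
Proof.
  intros HP. unfold clauses. split.
  - intros Hc Fo p Hp. destruct (Hc _ (in_map _ _ _ Hp)) as [H|H]; simpl in H; auto.
    apply pr_or in H as [H|H]; tauto.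
  - intros Hc q Hq. apply in_map_iff in Hq as [p [<- Hp]]. simpl. rewrite pr_or by auto.
    destruct (classic (F o)) as [Fo|Fo]; [| destruct (Hc Fo p Hp)]; tauto.
Qed.

Definition saturate (O : list form) (Q : pset) : pset :=
  fun F => exists H, prime H /\ agree O F H /\ Q H.

Lemma saturate_determined O Q : determined O (saturate O Q).
Proof.
  intros F F' _ _ E [H [HH [E' HQ]]]. exists H. split; [auto | split; [| auto]].
  intros o Ho. rewrite <- (E o Ho). auto.
Qed.

Lemma determined_split o O S F : determined (o :: O) S -> prime F ->
  (S F <-> (F o -> saturate O (fun H => H o /\ S H) F) /\
           (~ F o -> saturate O (fun H => ~ H o /\ S H) F)).
Proof.
  intros D HF. split.
  - intros HS. split; intros Fo; exists F; (split; [auto | split; [intros o' _; tauto | auto]]).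
  - intros [Hin Hout]. destruct (classic (F o)) as [Fo|Fo];
      [destruct (Hin Fo) as [H [HH [E [Ho HS]]]] | destruct (Hout Fo) as [H [HH [E [Ho HS]]]]];
      (apply (D H F); auto; intros o' [<-|Ho']; [tauto | symmetry; auto]).
Qed.

Lemma cnf O : forall S, determined O S ->
  exists L, forall F, prime F -> (S F <-> clauses L F).
Proof.
  induction O as [|o O IH]; intros S HS.
  - destruct (classic (exists F, prime F /\ S F)) as [[F0 [HP0 HS0]]|Hn].
    + exists []. intros F HF. split; [intros _ p [] |].
      intros _. apply (HS F0 F); auto. intros o [].
    + exists [(Top, Bot)]. intros F HF. split.
      * intros HSF. exfalso. eauto.
      * intros Hc. exfalso. destruct (Hc (Top, Bot) (or_introl eq_refl)) as [H|H];
          [apply H, prime_top | apply (prime_bot F)]; auto.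
  - destruct (IH _ (saturate_determined O (fun H => H o /\ S H))) as [L1 HL1].
    destruct (IH _ (saturate_determined O (fun H => ~ H o /\ S H))) as [L2 HL2].
    exists (map (fun p => (And o (fst p), snd p)) L1 ++ map (fun p => (fst p, Or o (snd p))) L2).
    intros F HF. rewrite clauses_app, clauses_guard_in, clauses_guard_out,
      <- HL1, <- HL2 by auto.
    apply determined_split; auto.
Qed.

Lemma IB_definable S : definable S -> exists c, forall F, prime F -> (IB S F <-> F c).
Proof.
  intros [O HO]. destruct (cnf O S HO) as [L HL]. exists (conjimp L).
  intros F HF. rewrite (IB_ext S (clauses L) HL). apply IB_clauses; auto.
Qed.

Lemma MB_definable S : definable S -> exists c, forall F, prime F -> (MB S F <-> F c).
Proof.
  intros [O HO]. destruct (cnf O S HO) as [L HL]. exists (conjstr L).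
  intros F HF. rewrite (MB_ext S (clauses L) HL). apply MB_clauses; auto.
Qed.

(* Grz_i for definable sets.  Counting how many formulas of O a theory
   contains, a theory can only properly grow finitely often along
   inclusion on O. *)
Fixpoint count_in (O : list form) (F : form -> Prop) : nat :=
  match O with
  | [] => 0
  | o :: O' => (if excluded_middle_informative (F o) then 1 else 0) + count_in O' F
  end.

Fixpoint members (O : list form) (F : form -> Prop) : list form :=
  match O with
  | [] => []
  | o :: O' => if excluded_middle_informative (F o) then o :: members O' F else members O' F
  end.

Lemma members_spec O F x : In x (members O F) <-> In x O /\ F x.
Proof.
  induction O as [|o O IH]; simpl; [tauto |].
  destruct (excluded_middle_informative (F o)); simpl; rewrite IH;
    split; intuition (subst; auto); tauto.
Qed.

Lemma count_in_le O F : count_in O F <= length O.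
Proof. induction O; simpl; [| destruct (excluded_middle_informative _)]; lia. Qed.

Lemma count_in_mono O F H : (forall o, In o O -> F o -> H o) -> count_in O F <= count_in O H.
Proof.
  induction O as [|o O IH]; simpl; intros E; [lia |].
  specialize (IH (fun x Hx => E x (or_intror Hx))).
  destruct (excluded_middle_informative (F o)), (excluded_middle_informative (H o));
    try lia; exfalso; auto.
Qed.

Lemma count_in_strict O F H : (forall o, In o O -> F o -> H o) ->
  (exists o, In o O /\ H o /\ ~ F o) -> count_in O F < count_in O H.
Proof.
  induction O as [|o O IH]; simpl; intros E [x [Hx [Hh Hf]]]; [destruct Hx |].
  assert (E' : forall o', In o' O -> F o' -> H o') by auto.
  pose proof (count_in_mono O F H E').
  destruct Hx as [->|Hx].
  - destruct (excluded_middle_informative (F x)), (excluded_middle_informative (H x));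
      try tauto; lia.
  - assert (count_in O F < count_in O H) by (apply IH; eauto).
    destruct (excluded_middle_informative (F o)), (excluded_middle_informative (H o));
      try lia; exfalso; auto.
Qed.

Definition cone (c : form) (O : list form) (F : form -> Prop) : form :=
  And c (conj (members O F)).

Lemma cone_self c O F : prime F -> F c -> F (cone c O F).
Proof.
  intros HF Fc. unfold cone. apply pr_and; auto. split; auto.
  apply pr_conj; auto. intros x Hx. apply members_spec in Hx. tauto.
Qed.

Lemma cone_above c O F K : prime K -> K (cone c O F) ->
  K c /\ forall o, In o O -> F o -> K o.
Proof.
  intros HK Kv. unfold cone in Kv. rewrite pr_and in Kv by auto. destruct Kv as [Kc Km].
  rewrite pr_conj in Km by auto. split; auto. intros o Ho Fo. apply Km, members_spec; auto.
Qed.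

Lemma grz_definable O P : determined O P -> forall F, prime F ->
  IB (fun H => IB (fun K => P K -> IB P K) H -> P H) F -> P F.
Proof.
  intros HD F HF [c [Fc HU]].
  (* every theory containing c lies in P, by induction on the number of
     members of O it omits *)
  assert (Cl : forall n H, prime H -> length O - count_in O H = n -> H c -> P H).
  { intro n. induction n as [n IH] using lt_wf_ind.
    intros H HH Hn Hc. apply NNPP. intros nP. apply nP, HU; auto.
    exists (cone c O H). split; [apply cone_self; auto |].
    intros K HK Kv PK. destruct (cone_above c O H K HK Kv) as [Kc Sub].
    destruct (classic (exists o, In o O /\ K o /\ ~ H o)) as [Ex|NEx].
    2:{ exfalso. apply nP, (HD K H); auto. intros o Ho. split; auto.
        intros Ko. apply NNPP. intros Ho'. apply NEx. eauto. }
    pose proof (count_in_strict O H K Sub Ex).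
    exists (cone c O K). split; [apply cone_self; auto |].
    intros K' HK' K'v. destruct (cone_above c O K K' HK' K'v) as [K'c Sub'].
    pose proof (count_in_mono O K K' Sub'). pose proof (count_in_le O K').
    apply (IH (length O - count_in O K')); auto. lia. }
  exact (Cl _ F HF eq_refl Fc).
Qed.

Fixpoint eval (v : nat -> pset) (f : mform) : pset :=
  match f with
  | MVar n => v n
  | MTop => fun _ => True
  | MBot => fun _ => False
  | MAnd a b => fun F => eval v a F /\ eval v b F
  | MOr a b => fun F => eval v a F \/ eval v b F
  | MImp a b => fun F => eval v a F -> eval v b F
  | BoxI a => IB (eval v a)
  | BoxM a => MB (eval v a)
  end.

Lemma eval_msubst v s f : eval v (msubst s f) = eval (fun n => eval v (s n)) f.
Proof. induction f; simpl; try rewrite IHf1, IHf2; try rewrite IHf; reflexivity. Qed.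

Definition truth (P : Prop) : bool := if excluded_middle_informative P then true else false.

Lemma eval_beval v f F : box_free f ->
  (eval v f F <-> beval (fun n => truth (v n F)) f = true).
Proof.
  unfold truth. induction f; simpl; intros Hb; try tauto.
  - destruct (excluded_middle_informative (v n F)); split; auto; congruence.
  - split; [tauto | congruence].
  - destruct Hb. rewrite IHf1, IHf2 by auto.
    destruct (beval _ f1), (beval _ f2); simpl; intuition congruence.
  - destruct Hb. rewrite IHf1, IHf2 by auto.
    destruct (beval _ f1), (beval _ f2); simpl; intuition congruence.
  - destruct Hb. rewrite IHf1, IHf2 by auto.
    destruct (beval _ f1), (beval _ f2); simpl; intuition congruence.
Qed.

Lemma definable_ext S T : (forall F, prime F -> (S F <-> T F)) -> definable T -> definable S.
Proof.
  intros E [O HO]. exists O. intros F H HF HH EO HS. apply E; auto.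
  apply (HO F H); auto. apply E; auto.
Qed.

Lemma definable_basic c : definable (fun F => F c).
Proof. exists [c]. intros F H HF HH E. apply E. left; auto. Qed.

Lemma definable_const (P : Prop) : definable (fun _ => P).
Proof. exists []. intros F H HF HH E HP. exact HP. Qed.

Lemma definable_bin S T (op : Prop -> Prop -> Prop) :
  (forall A B A' B', (A <-> A') -> (B <-> B') -> op A B -> op A' B') ->
  definable S -> definable T -> definable (fun F => op (S F) (T F)).
Proof.
  intros Hop [O1 H1] [O2 H2]. exists (O1 ++ O2). intros F H HF HH E.
  apply Hop; [apply (determined_iff O1 S F H H1) | apply (determined_iff O2 T F H H2)];
    auto; intros o Ho; apply E, in_or_app; auto.
Qed.

Lemma definable_eval v : (forall n, definable (v n)) -> forall f, definable (eval v f).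
Proof.
  intros Hv f; induction f; simpl; auto using definable_const.
  - apply (definable_bin _ _ and); auto. tauto.
  - apply (definable_bin _ _ or); auto. tauto.
  - apply (definable_bin _ _ (fun A B => A -> B)); auto. tauto.
  - destruct (IB_definable _ IHf) as [c Hc]. exact (definable_ext _ _ Hc (definable_basic c)).
  - destruct (MB_definable _ IHf) as [c Hc]. exact (definable_ext _ _ Hc (definable_basic c)).
Qed.

Lemma eval_t v c : (forall n F, prime F -> (IB (v n) F <-> F (c n))) ->
  forall g F, prime F -> (eval v (t g) F <-> F (subst c g)).
Proof.
  intros Hc g. induction g; intros F HF; simpl.
  - apply Hc; auto.
  - split; auto. intros _; apply prime_top; auto.
  - split; [tauto |]. apply prime_bot; auto.
  - rewrite (IB_ext _ (fun H => H (And (subst c g1) (subst c g2)))); [apply IB_basic; auto |].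
    intros H HH. rewrite pr_and, IHg1, IHg2 by auto. tauto.
  - rewrite (IB_ext _ (fun H => H (Or (subst c g1) (subst c g2)))); [apply IB_basic; auto |].
    intros H HH. rewrite pr_or, IHg1, IHg2 by auto. tauto.
  - rewrite (IB_ext _ (clauses [(subst c g1, subst c g2)])).
    + rewrite IB_clauses by auto. unfold conjimp. simpl. rewrite pr_and by auto.
      split; [tauto |]. split; auto. apply prime_top; auto.
    + intros H HH. rewrite IHg1, IHg2 by auto. apply clause_single; auto.
  - rewrite (IB_ext _ (fun H => H (Str (subst c g1) (subst c g2)))); [apply IB_basic; auto |].
    intros H HH. rewrite (MB_ext _ (clauses [(subst c g1, subst c g2)])).
    + rewrite MB_clauses by auto. unfold conjstr. simpl. rewrite pr_and by auto.
      split; [tauto |]. split; auto. apply prime_top; auto.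
    + intros K HK. rewrite IHg1, IHg2 by auto. apply clause_single; auto.
Qed.

Lemma upper_sound g : S4K_ext (upper_axioms G) g ->
  forall v, (forall n, definable (v n)) -> forall F, prime F -> eval v g F.
Proof.
  induction 1 as [s f Hc | | | | | f Hf | a b Ha IHa Hab IHab | a Ha IHa | a Ha IHa
                 | s f Hf IHf]; intros v Hv F HF.
  -
    rewrite eval_msubst. destruct Hc as [Hb Hv']. apply eval_beval; auto.
  -
    simpl. intros [a [Fa Ha]] [b [Fb Hb]]. exists (And a b). split; [apply pr_and; auto |].
    intros H HH Hab. apply pr_and in Hab as [Ha' Hb']; auto.
  -
    simpl. intros [L1 [F1 H1]] [L2 [F2 H2]]. exists (L1 ++ L2). split.
    + intros p Hp. apply in_app_or in Hp as [Hp|Hp]; auto.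
    + intros H HH Hc. apply clauses_app in Hc as [Hc1 Hc2]. apply H1; auto.
  -
    simpl. intros [a [Fa Ha]]. auto.
  -
    simpl. intros [a [Fa Ha]]. exists a. split; auto. intros H HH Hha. exists a. auto.
  - destruct Hf as [-> | [[f0 [Gf ->]] | ->]].
    +
      destruct (Hv 0) as [O HO]. exact (grz_definable O _ HO F HF).
    +
      assert (Hc : forall n, exists c, forall F, prime F -> (IB (v n) F <-> F c))
        by (intros n; apply IB_definable, Hv).
      apply choice in Hc as [c Hc].
      apply (eval_t v c Hc f0 F HF), pr_thm; auto. apply iA_subst, iA_hyp, Gf.
    +
      simpl. intros [L [FL HL]]. exists (conjstr L). split.
      * unfold conjstr. apply pr_conj_map; auto.
      * intros H HH HcL. exists L. split; auto.
        unfold conjstr in HcL. rewrite pr_conj_map in HcL by auto. exact HcL.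
  - apply (IHab v Hv F HF), IHa; auto.
  - simpl. exists Top. split; [apply prime_top; auto |]. intros H HH _. auto.
  - simpl. exists []. split; [intros p [] |]. intros H HH _. auto.
  - rewrite eval_msubst. apply IHf; auto. intros n. apply definable_eval; auto.
Qed.

End CanonicalModel.

Lemma subst_var f : subst Var f = f.
Proof. induction f; simpl; congruence. Qed.

(* Faithfulness of t: evaluate under the valuation p_n ↦ [p_n]. *)
Lemma faithful G f : S4K_ext (upper_axioms G) (t f) -> iA_ext G f.
Proof.
  intros H. set (v := fun n (F : form -> Prop) => F (Var n)).
  assert (Hv : forall n, definable G (v n)) by (intros; apply definable_basic).
  assert (Hc : forall n F, prime G F -> (IB G (v n) F <-> F (Var n)))
    by (intros; apply IB_basic; auto).
  apply top_le, sep. intros F HF _. rewrite <- (subst_var f).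
  apply (eval_t G v Var Hc f F HF), (upper_sound G _ H v Hv F HF).
Qed.

Section S4KDerivations.
Variable L : mform -> Prop.
Hypothesis HL : is_S4K_logic L.

Definition sub5 (a b c d e : mform) (n : nat) : mform :=
  match n with 0 => a | 1 => b | 2 => c | 3 => d | _ => e end.

Ltac tautology_instance a b c d e schema :=
  apply (proj1 HL (sub5 a b c d e) schema);
  split; [simpl; tauto | intros v; simpl; destruct (v 0), (v 1), (v 2), (v 3), (v 4); reflexivity].

Lemma Lmp a b : L a -> L (MImp a b) -> L b.
Proof. apply HL. Qed.
Lemma Lnec a : L a -> L (BoxI a).
Proof. apply HL. Qed.
Lemma Lnecm a : L a -> L (BoxM a).
Proof. apply HL. Qed.
Lemma Lsubst s f : L f -> L (msubst s f).
Proof. apply HL. Qed.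

Lemma LKi a b : L (MImp (BoxI (MImp a b)) (MImp (BoxI a) (BoxI b))).
Proof. apply (Lsubst (sub5 a b a a a) K_i), HL. Qed.
Lemma LKm a b : L (MImp (BoxM (MImp a b)) (MImp (BoxM a) (BoxM b))).
Proof. apply (Lsubst (sub5 a b a a a) K_m), HL. Qed.
Lemma LT a : L (MImp (BoxI a) a).
Proof. apply (Lsubst (sub5 a a a a a) T_i), HL. Qed.
Lemma L4 a : L (MImp (BoxI a) (BoxI (BoxI a))).
Proof. apply (Lsubst (sub5 a a a a a) Four_i), HL. Qed.

Lemma Ltop : L MTop.
Proof. tautology_instance MTop MTop MTop MTop MTop MTop. Qed.

Lemma Lrefl a : L (MImp a a).
Proof. tautology_instance a a a a a (MImp (MVar 0) (MVar 0)). Qed.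

Lemma Ltrans a b c : L (MImp a b) -> L (MImp b c) -> L (MImp a c).
Proof.
  intros H1 H2. apply (Lmp _ _ H2), (Lmp _ _ H1).
  tautology_instance a b c a a
    (MImp (MImp (MVar 0) (MVar 1)) (MImp (MImp (MVar 1) (MVar 2)) (MImp (MVar 0) (MVar 2)))).
Qed.

Lemma Lweaken a b : L b -> L (MImp a b).
Proof.
  intros H. apply (Lmp _ _ H).
  tautology_instance a b a a a (MImp (MVar 1) (MImp (MVar 0) (MVar 1))).
Qed.

Lemma Lcurry a b c : L (MImp (MAnd a b) c) -> L (MImp a (MImp b c)).
Proof.
  intros H. apply (Lmp _ _ H).
  tautology_instance a b c a a
    (MImp (MImp (MAnd (MVar 0) (MVar 1)) (MVar 2)) (MImp (MVar 0) (MImp (MVar 1) (MVar 2)))).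
Qed.

Lemma Luncurry a b c : L (MImp a (MImp b c)) -> L (MImp (MAnd a b) c).
Proof.
  intros H. apply (Lmp _ _ H).
  tautology_instance a b c a a
    (MImp (MImp (MVar 0) (MImp (MVar 1) (MVar 2))) (MImp (MAnd (MVar 0) (MVar 1)) (MVar 2))).
Qed.

Lemma Lmono a b : L (MImp a b) -> L (MImp (BoxI a) (BoxI b)).
Proof. intros H. exact (Lmp _ _ (Lnec _ H) (LKi a b)). Qed.
Lemma Lmonom a b : L (MImp a b) -> L (MImp (BoxM a) (BoxM b)).
Proof. intros H. exact (Lmp _ _ (Lnecm _ H) (LKm a b)). Qed.

Lemma Lband a b : L (MImp (MAnd (BoxI a) (BoxI b)) (BoxI (MAnd a b))).
Proof.
  apply Luncurry. eapply Ltrans; [apply Lmono | apply LKi].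
  tautology_instance a b a a a (MImp (MVar 0) (MImp (MVar 1) (MAnd (MVar 0) (MVar 1)))).
Qed.
Lemma Lbandm a b : L (MImp (MAnd (BoxM a) (BoxM b)) (BoxM (MAnd a b))).
Proof.
  apply Luncurry. eapply Ltrans; [apply Lmonom | apply LKm].
  tautology_instance a b a a a (MImp (MVar 0) (MImp (MVar 1) (MAnd (MVar 0) (MVar 1)))).
Qed.

Lemma Lbox_deduction P R S :
  L (MImp (MAnd (BoxI P) (BoxI R)) (BoxI S)) -> L (MImp (BoxI P) (BoxI (MImp (BoxI R) (BoxI S)))).
Proof. intros H. eapply Ltrans; [apply L4 | apply Lmono, Lcurry, H]. Qed.

Definition stable (X : mform) : Prop := L (MImp X (BoxI X)).

Lemma stable_t f : stable (t f).
Proof.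
  unfold stable. destruct f; simpl; try apply L4.
  - apply Lweaken, Lnec, Ltop.
  - tautology_instance (BoxI MBot) MTop MTop MTop MTop (MImp MBot (MVar 0)).
Qed.

Lemma stable_and B C : stable B -> stable C -> stable (MAnd B C).
Proof.
  intros HB HC. unfold stable. eapply Ltrans; [| apply Lband].
  apply (Lmp _ _ HC), (Lmp _ _ HB).
  tautology_instance B C (BoxI B) (BoxI C) B
    (MImp (MImp (MVar 0) (MVar 2)) (MImp (MImp (MVar 1) (MVar 3))
      (MImp (MAnd (MVar 0) (MVar 1)) (MAnd (MVar 2) (MVar 3))))).
Qed.

Lemma Lbox_mp a b : L a -> L (BoxI (MImp a b)) -> L b.
Proof. intros H1 H2. exact (Lmp _ _ H1 (Lmp _ _ H2 (LT _))). Qed.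

Lemma t_ax_K A B : stable A -> L (BoxI (MImp A (BoxI (MImp B A)))).
Proof.
  intros HA. apply Lnec. eapply Ltrans; [exact HA | apply Lmono].
  tautology_instance A B A A A (MImp (MVar 0) (MImp (MVar 1) (MVar 0))).
Qed.

Lemma t_ax_S A B C :
  L (BoxI (MImp (BoxI (MImp A (BoxI (MImp B C))))
                (BoxI (MImp (BoxI (MImp A B)) (BoxI (MImp A C)))))).
Proof.
  apply Lnec, Lbox_deduction. eapply Ltrans; [apply Lband | apply Lmono].
  apply (Lmp _ _ (LT (MImp B C))).
  tautology_instance A B C (BoxI (MImp B C)) A
    (MImp (MImp (MVar 3) (MImp (MVar 1) (MVar 2)))
      (MImp (MAnd (MImp (MVar 0) (MVar 3)) (MImp (MVar 0) (MVar 1))) (MImp (MVar 0) (MVar 2)))).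
Qed.

Lemma t_ax_and1 A B : L (BoxI (MImp (BoxI (MAnd A B)) A)).
Proof.
  apply Lnec. eapply Ltrans; [apply LT |].
  tautology_instance A B A A A (MImp (MAnd (MVar 0) (MVar 1)) (MVar 0)).
Qed.

Lemma t_ax_and2 A B : L (BoxI (MImp (BoxI (MAnd A B)) B)).
Proof.
  apply Lnec. eapply Ltrans; [apply LT |].
  tautology_instance A B A A A (MImp (MAnd (MVar 0) (MVar 1)) (MVar 1)).
Qed.

Lemma t_ax_and3 A B : stable A -> stable B ->
  L (BoxI (MImp A (BoxI (MImp B (BoxI (MAnd A B)))))).
Proof.
  intros HA HB. apply Lnec. eapply Ltrans; [exact HA |].
  eapply Ltrans; [apply Lbox_deduction, Lband | apply Lmono].
  apply (Lmp _ _ HB).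
  tautology_instance B (BoxI B) (BoxI (MAnd A B)) A A
    (MImp (MImp (MVar 0) (MVar 1)) (MImp (MImp (MVar 1) (MVar 2)) (MImp (MVar 0) (MVar 2)))).
Qed.

Lemma t_ax_or1 A B : stable A -> L (BoxI (MImp A (BoxI (MOr A B)))).
Proof.
  intros HA. apply Lnec. eapply Ltrans; [exact HA | apply Lmono].
  tautology_instance A B A A A (MImp (MVar 0) (MOr (MVar 0) (MVar 1))).
Qed.

Lemma t_ax_or2 A B : stable B -> L (BoxI (MImp B (BoxI (MOr A B)))).
Proof.
  intros HB. apply Lnec. eapply Ltrans; [exact HB | apply Lmono].
  tautology_instance A B A A A (MImp (MVar 1) (MOr (MVar 0) (MVar 1))).
Qed.

Lemma t_ax_or3 A B C :
  L (BoxI (MImp (BoxI (MImp A C))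
    (BoxI (MImp (BoxI (MImp B C)) (BoxI (MImp (BoxI (MOr A B)) C)))))).
Proof.
  apply Lnec, Lbox_deduction. eapply Ltrans; [apply Lband | apply Lmono].
  apply (Lmp _ _ (LT (MOr A B))).
  tautology_instance A B C (BoxI (MOr A B)) A
    (MImp (MImp (MVar 3) (MOr (MVar 0) (MVar 1)))
      (MImp (MAnd (MImp (MVar 0) (MVar 2)) (MImp (MVar 1) (MVar 2))) (MImp (MVar 3) (MVar 2)))).
Qed.

Lemma t_ax_bot A : L (BoxI (MImp MBot A)).
Proof. apply Lnec. tautology_instance A A A A A (MImp MBot (MVar 0)). Qed.

Lemma ipc_t f : ipc f -> forall s, L (t (subst s f)).
Proof.
  induction 1; intros s; simpl.
  - apply t_ax_K, stable_t.
  - apply t_ax_S.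
  - apply t_ax_and1.
  - apply t_ax_and2.
  - apply t_ax_and3; apply stable_t.
  - apply t_ax_or1, stable_t.
  - apply t_ax_or2, stable_t.
  - apply t_ax_or3.
  - apply t_ax_bot.
  - apply Ltop.
  - exact (Lbox_mp _ _ (IHipc1 s) (IHipc2 s)).
Qed.

Lemma t_str_axiom X Y Z : L (MImp (MAnd X Y) Z) ->
  L (BoxI (MImp (BoxI (MAnd (BoxI (BoxM X)) (BoxI (BoxM Y)))) (BoxI (BoxM Z)))).
Proof.
  intros H. apply Lnec. eapply Ltrans; [apply LT |].
  eapply Ltrans; [apply Lband | apply Lmono].
  eapply Ltrans; [apply Lbandm | apply Lmonom, H].
Qed.

Definition equiv (X Y : mform) : Prop := L (MImp X Y) /\ L (MImp Y X).

Lemma Limp_mono a b c d : L (MImp c a) -> L (MImp b d) -> L (MImp (MImp a b) (MImp c d)).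
Proof.
  intros Hca Hbd. apply (Lmp _ _ Hbd), (Lmp _ _ Hca).
  tautology_instance a b c d a
    (MImp (MImp (MVar 2) (MVar 0)) (MImp (MImp (MVar 1) (MVar 3))
      (MImp (MImp (MVar 0) (MVar 1)) (MImp (MVar 2) (MVar 3))))).
Qed.

Lemma box_congr (op : mform -> mform -> mform) X1 X2 Y1 Y2 :
  (forall a b c d, equiv a c -> equiv b d -> L (MImp (op a b) (op c d))) ->
  equiv X1 Y1 -> equiv X2 Y2 -> equiv (BoxI (op X1 X2)) (BoxI (op Y1 Y2)).
Proof.
  intros Hop [H1 H1'] [H2 H2']. split; apply Lmono, Hop; split; auto.
Qed.

Lemma t_subst s f : equiv (msubst (fun n => t (s n)) (t f)) (t (subst s f)).
Proof.
  induction f; simpl.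
  - split; [apply LT | apply stable_t].
  - split; apply Lrefl.
  - split; apply Lrefl.
  - apply box_congr; auto. intros a b c d [H1 _] [H2 _].
    apply (Lmp _ _ H2), (Lmp _ _ H1).
    tautology_instance a b c d a
      (MImp (MImp (MVar 0) (MVar 2)) (MImp (MImp (MVar 1) (MVar 3))
        (MImp (MAnd (MVar 0) (MVar 1)) (MAnd (MVar 2) (MVar 3))))).
  - apply box_congr; auto. intros a b c d [H1 _] [H2 _].
    apply (Lmp _ _ H2), (Lmp _ _ H1).
    tautology_instance a b c d a
      (MImp (MImp (MVar 0) (MVar 2)) (MImp (MImp (MVar 1) (MVar 3))
        (MImp (MOr (MVar 0) (MVar 1)) (MOr (MVar 2) (MVar 3))))).
  - apply box_congr; auto. intros a b c d [_ H1] [H2 _]. apply Limp_mono; auto.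
  - destruct IHf1 as [H1 H1'], IHf2 as [H2 H2'].
    split; apply Lmono, Lmonom, Limp_mono; auto.
Qed.

Lemma subst_comp s s0 f : subst s (subst s0 f) = subst (fun n => subst s (s0 n)) f.
Proof. induction f; simpl; congruence. Qed.

Lemma t_sound G : (forall f, G f -> L (t f)) ->
  forall f, iA_ext G f -> forall s, L (t (subst s f)).
Proof.
  intros HG f Hf. induction Hf; intros s'; simpl.
  - rewrite subst_comp. apply ipc_t; auto.
  -
    set (A := t (subst s' a)); set (B := t (subst s' b)); set (C := t (subst s' c)).
    apply t_str_axiom.
    apply (Lmp _ _ (stable_and B C (stable_t _) (stable_t _))).
    tautology_instance A B C (BoxI (MAnd B C)) MTop
      (MImp (MImp (MAnd (MVar 1) (MVar 2)) (MVar 3))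
        (MImp (MAnd (MImp (MVar 0) (MVar 1)) (MImp (MVar 0) (MVar 2))) (MImp (MVar 0) (MVar 3)))).
  -
    set (A := t (subst s' a)); set (B := t (subst s' b)); set (C := t (subst s' c)).
    apply t_str_axiom, (Lmp _ _ (LT (MOr A B))).
    tautology_instance A B C (BoxI (MOr A B)) MTop
      (MImp (MImp (MVar 3) (MOr (MVar 0) (MVar 1)))
        (MImp (MAnd (MImp (MVar 0) (MVar 2)) (MImp (MVar 1) (MVar 2))) (MImp (MVar 3) (MVar 2)))).
  -
    apply t_str_axiom.
    tautology_instance (t (subst s' a)) (t (subst s' b)) (t (subst s' c)) MTop MTop
      (MImp (MAnd (MImp (MVar 0) (MVar 1)) (MImp (MVar 1) (MVar 2))) (MImp (MVar 0) (MVar 2))).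
  - exact (Lmp _ _ (Lsubst (fun n => t (s' n)) _ (HG f H)) (proj1 (t_subst s' f))).
  - exact (Lbox_mp _ _ (IHHf1 s') (IHHf2 s')).
  - apply Lnec, Lnecm, (Lmp _ _ (IHHf s')), LT.
  - rewrite subst_comp. apply IHHf.
Qed.

End S4KDerivations.

Theorem theorem4p14 (G : form -> Prop) (Theta : mform -> Prop) :
  is_S4K_logic Theta ->
  (forall g, S4K_ext (t_img G) g -> Theta g) ->
  (forall g, Theta g -> S4K_ext (upper_axioms G) g) ->
  forall f : form, iA_ext G f <-> Theta (t f).
Proof.
  intros HTheta Hlower Hupper f. split.
  -
    intros Hf. rewrite <- (subst_var f).
    apply (t_sound Theta HTheta G); auto.
    intros g Hg. apply Hlower, S_hyp. exists g. auto.
  -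
    intros Hf. apply faithful, Hupper, Hf.
Qed.
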